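(* Consider the factorized (COM) cost model described in the context. There is no function $\rho$ that assigns a real number to every finite non-empty sequence of parameter triples $(m, fo, c)$ with the following property: for every instance and for all sequences $A, U, V, B$ of non-root nodes, with $U$ and $V$ non-empty, such that both concatenations $AUVB$ and $AVUB$ are valid join orders, $$\mathrm{Cost}(AUVB) \le \mathrm{Cost}(AVUB) \iff \rho(\mathrm{par}(U)) \le \rho(\mathrm{par}(V)).$$ Here $\mathrm{par}(W)$ denotes the sequence of triples $(m_i, fo_i, c_i)$ of the nodes $i$ of $W$, in order. In other words, this cost function does not satisfy the adjacent sequence interchange (ASI) property.
   Context: **Instance.** An instance consists of the following data. - A rooted tree $\mathcal{J}$ whose root $r$ is the driver relation and whose non-root nodes are join operators. - A number $N>0$, the driver cardinality. - For each non-root node $i$: a match probability $m_i\in[0,1]$, a fanout $fo_i\ge 1$ (a real number), and a per-probe cost $c_i>0$. By convention $m_r=1$. **Valid join orders.** A valid join order is a sequence listing every non-root node exactly once, such that each node whose parent is not $r$ appears after its parent. **Survival probability.** Let $T$ be a connected set of nodes with top node $v$ (that is, $T$ contains $v$ and, for each of its members other than $v$, also that member's parent). Define recursively $$m_T = m_v\Big(1-\big(1-\prod_{u} m_{T_u}\big)^{fo_v}\Big).$$ The product ranges over the children $u$ of $v$ that lie in $T$, and $T_u$ is the set of nodes of $T$ in the subtree rooted at $u$. An empty product equals $1$, so a single node $v$ has $m_{\{v\}} = m_v$. **Number of probes.** Suppose node $l$ is placed when the set of already placed nodes is $S$, where $S$ contains $r$ and all non-root nodes placed earlier. Let $r=a_0,a_1,\dots,a_k$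 be the proper ancestors of $l$, listed from the root down to the parent of $l$. For a node $u\in S$, let $T(u,S)$ be the set of nodes of $S$ in the subtree rooted at $u$. The expected number of probes into $l$ is $$\mathrm{probes}(l,S)=N\prod_{j=1}^{k} m_{a_j}fo_{a_j}\;\times\;\prod_{j=0}^{k}\;\prod_{u} m_{T(u,S)}.$$ Here the inner product ranges over the children $u$ of $a_j$ with $u\in S$ and $u\notin\{a_{j+1},l\}$. In particular, the first operator placed receives $N$ probes. **Cost of an order.** The cost of a valid order $\sigma$ is $\mathrm{Cost}(\sigma)=\sum_l c_l\,\mathrm{probes}(l,S_l)$, where $S_l$ is the set consisting of $r$ and the nodes preceding $l$ in $\sigma$. *)

From Stdlib Require Import Reals List Arith Permutation Bool.
Import ListNotations.
Open Scope R_scope.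

(* Nodes are natural numbers 0..n; node 0 is the root r (driver relation),
   nodes 1..n are the join operators.  [par i] is the parent of node i. *)

(* Real power b^e for b in [0,1], e >= 1 (with 0^e = 0). *)
Definition rpow (b e : R) : R :=
  if Req_EM_T b 0 then 0 else Rpower b e.

Definition prodR (l : list R) : R := fold_right Rmult 1 l.

Definition memn (x : nat) (P : list nat) : bool := existsb (Nat.eqb x) P.

Definition is_tree (n : nat) (par : nat -> nat) : Prop :=
  forall i, (1 <= i <= n)%nat ->
    (par i <= n)%nat /\ exists k, Nat.iter k par i = 0%nat.

(* Well-formed instance. (m_r = 1 by convention; m 0 is never used.) *)
Definition is_instance (n : nat) (par : nat -> nat) (N : R)
    (m fo c : nat -> R) : Prop :=
  is_tree n par /\ 0 < N /\
  forall i, (1 <= i <= n)%nat -> 0 <= m i <= 1 /\ 1 <= fo i /\ 0 < c i.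

Definition children (n : nat) (par : nat -> nat) (v : nat) : list nat :=
  filter (fun u => Nat.eqb (par u) v) (seq 1%nat n).

(* survival probability m_{T(v,S)} of the nodes of S in the subtree of v,
   computed with fuel (fuel n+1 suffices since the height is at most n). *)
Fixpoint surv (fuel : nat) (n : nat) (par : nat -> nat) (m fo : nat -> R)
    (P : list nat) (v : nat) : R :=
  match fuel with
  | O => 1
  | S f =>
      m v * (1 - rpow (1 - prodR (map (surv f n par m fo P)
                          (filter (fun u => memn u P) (children n par v))))
                      (fo v))
  end.

Fixpoint up (fuel : nat) (par : nat -> nat) (x : nat) : list nat :=
  match fuel with
  | O => []
  | S f => if Nat.eqb x 0 then [] else par x :: up f par (par x)
  end.

(* expected number of probes into l when P (containing 0) is placed *)
Definition probes (n : nat) (par : nat -> nat) (N : R) (m fo : nat -> R)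
    (P : list nat) (l : nat) : R :=
  let anc := rev (up (S n) par l) in          (* a_0 = r, a_1, ..., a_k *)
  let nxt := tl (anc ++ [l]) in                 (* a_1, ..., a_k, l *)
  N * prodR (map (fun a => m a * fo a) (tl anc)) *
  prodR (map (fun p : nat * nat =>
                let (a, b) := p in
                prodR (map (surv (S n) n par m fo P)
                  (filter (fun u => memn u P && negb (Nat.eqb u b)
                                    && negb (Nat.eqb u l))
                          (children n par a))))
             (combine anc nxt)).

Fixpoint cost_aux (n : nat) (par : nat -> nat) (N : R) (m fo c : nat -> R)
    (placed : list nat) (sigma : list nat) : R :=
  match sigma with
  | [] => 0
  | l :: rest => c l * probes n par N m fo (0%nat :: placed) l
                 + cost_aux n par N m fo c (placed ++ [l]) rest
  end.

Definition Cost (n : nat) (par : nat -> nat) (N : R) (m fo c : nat -> R)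
    (sigma : list nat) : R := cost_aux n par N m fo c [] sigma.

Definition valid_order (n : nat) (par : nat -> nat) (sigma : list nat) : Prop :=
  Permutation sigma (seq 1%nat n) /\
  forall x l y, sigma = x ++ l :: y -> par l <> 0%nat -> In (par l) x.

Definition params (m fo c : nat -> R) (W : list nat) : list (R * R * R) :=
  map (fun i => (m i, fo i, c i)) W.

(* In the tree with edges r-1, 1-2 and r-3,
   start with A = [1]: the parameters of 2 and 3 do not involve fo_1, yet
   placing 2 before 3 is strictly cheaper when fo_1 = 1 and strictly more
   expensive when fo_1 = 2, so the ranking would have to order the same two
   parameter lists both ways. *)
From Stdlib Require Import Reals List Lra Lia Permutation.
Import ListNotations.
Open Scope R_scope.

Definition asi_rank (rho : list (R * R * R) -> R) : Prop :=
  forall (n : nat) (par : nat -> nat) (N : R) (m fo c : nat -> R),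
    is_instance n par N m fo c ->
    forall A U V B : list nat,
      U <> [] -> V <> [] ->
      valid_order n par (A ++ U ++ V ++ B) ->
      valid_order n par (A ++ V ++ U ++ B) ->
      (Cost n par N m fo c (A ++ U ++ V ++ B)
         <= Cost n par N m fo c (A ++ V ++ U ++ B)
       <-> rho (params m fo c U) <= rho (params m fo c V)).

Lemma asi_rank_lt rho n par N m fo c A U V B :
  asi_rank rho -> is_instance n par N m fo c ->
  U <> [] -> V <> [] ->
  valid_order n par (A ++ U ++ V ++ B) ->
  valid_order n par (A ++ V ++ U ++ B) ->
  Cost n par N m fo c (A ++ V ++ U ++ B) < Cost n par N m fo c (A ++ U ++ V ++ B) ->
  rho (params m fo c V) < rho (params m fo c U).
Proof.
  intros Hrho Hinst HU HV HUV HVU Hlt.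
  apply Rnot_le_lt; intros Hle.
  apply (Hrho n par N m fo c Hinst A U V B HU HV HUV HVU) in Hle.
  lra.
Qed.

Lemma valid_order_after_head n par h rest :
  Permutation (h :: rest) (seq 1 n) -> par h = 0%nat ->
  (forall l, In l rest -> par l = 0%nat \/ par l = h) ->
  valid_order n par (h :: rest).
Proof.
  intros Hperm Hh Hrest; split; [exact Hperm |].
  intros [| x0 x] l y Heq Hl; injection Heq as -> Heq.
  - contradiction.
  - left.
    assert (Hin : In l rest) by (rewrite Heq; apply in_or_app; right; left; reflexivity).
    destruct (Hrest l Hin); [contradiction | congruence].
Qed.

Lemma rpow_0_l e : rpow 0 e = 0.
Proof. unfold rpow; destruct Req_EM_T; [reflexivity | lra]. Qed.

Lemma rpow_Rpower b e : b <> 0 -> rpow b e = Rpower b e.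
Proof. unfold rpow; destruct Req_EM_T; [contradiction | reflexivity]. Qed.

Definition ce_par (i : nat) : nat := match i with 2%nat => 1%nat | _ => 0%nat end.
Definition ce_m (i : nat) : R := match i with 1%nat => 1 | _ => /2 end.
Definition ce_fo (F : R) (i : nat) : R := match i with 1%nat => F | _ => 1 end.
Definition ce_c (i : nat) : R := match i with 3%nat => 2 | _ => 1 end.

Lemma ce_instance F : 1 <= F -> is_instance 3 ce_par 1 ce_m (ce_fo F) ce_c.
Proof.
  intros HF; split; [| split; [lra |]].
  - intros i Hi; destruct i as [| [| [| [| i]]]]; try lia;
      split; cbn; try lia.
    + exists 1%nat; reflexivity.
    + exists 2%nat; reflexivity.
    + exists 1%nat; reflexivity.
  - intros i Hi; destruct i as [| [| [| [| i]]]]; try lia; cbn; lra.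
Qed.

Lemma ce_valid_123 : valid_order 3 ce_par [1; 2; 3]%nat.
Proof.
  apply valid_order_after_head; [apply Permutation_refl | reflexivity |].
  intros l [<- | [<- | []]]; cbn; auto.
Qed.

Lemma ce_valid_132 : valid_order 3 ce_par [1; 3; 2]%nat.
Proof.
  apply valid_order_after_head; [constructor; apply perm_swap | reflexivity |].
  intros l [<- | [<- | []]]; cbn; auto.
Qed.

Lemma ce_cost_123 F :
  Cost 3 ce_par 1 ce_m (ce_fo F) ce_c [1; 2; 3]%nat = 1 + F + 2 * (1 - Rpower (/2) F).
Proof.
  unfold Cost; cbn; unfold probes; cbn.
  rewrite Rminus_diag, rpow_0_l, rpow_Rpower by lra.
  replace (1 - / 2 * (1 - 0) * 1) with (/2) by lra.
  ring.
Qed.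

Lemma ce_cost_132 F :
  Cost 3 ce_par 1 ce_m (ce_fo F) ce_c [1; 3; 2]%nat = 3 + F / 2.
Proof.
  unfold Cost; cbn; unfold probes; cbn.
  rewrite !Rminus_diag, !rpow_0_l.
  field.
Qed.

Lemma ce_123_cheaper_at_1 :
  Cost 3 ce_par 1 ce_m (ce_fo 1) ce_c [1; 2; 3]%nat
  < Cost 3 ce_par 1 ce_m (ce_fo 1) ce_c [1; 3; 2]%nat.
Proof. rewrite ce_cost_123, ce_cost_132, Rpower_1; lra. Qed.

Lemma ce_132_cheaper_at_2 :
  Cost 3 ce_par 1 ce_m (ce_fo 2) ce_c [1; 3; 2]%nat
  < Cost 3 ce_par 1 ce_m (ce_fo 2) ce_c [1; 2; 3]%nat.
Proof.
  rewrite ce_cost_123, ce_cost_132.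
  replace (Rpower (/2) 2) with ((/2) ^ 2)
    by (rewrite <- Rpower_pow by lra; f_equal; cbn; ring).
  lra.
Qed.

Theorem theorem3p1 :
  ~ exists rho : list (R * R * R) -> R,
      forall (n : nat) (par : nat -> nat) (N : R) (m fo c : nat -> R),
        is_instance n par N m fo c ->
        forall A U V B : list nat,
          U <> [] -> V <> [] ->
          valid_order n par (A ++ U ++ V ++ B) ->
          valid_order n par (A ++ V ++ U ++ B) ->
          (Cost n par N m fo c (A ++ U ++ V ++ B)
             <= Cost n par N m fo c (A ++ V ++ U ++ B)
           <-> rho (params m fo c U) <= rho (params m fo c V)).
Proof.
  intros [rho Hrho].
  assert (rank_2_lt_3 := asi_rank_lt rho 3 ce_par 1 ce_m (ce_fo 1) ce_c [1%nat] [3%nat] [2%nat] []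
    Hrho (ce_instance 1 (Rle_refl 1)) ltac:(discriminate) ltac:(discriminate)
    ce_valid_132 ce_valid_123 ce_123_cheaper_at_1).
  assert (rank_3_lt_2 := asi_rank_lt rho 3 ce_par 1 ce_m (ce_fo 2) ce_c [1%nat] [2%nat] [3%nat] []
    Hrho (ce_instance 2 ltac:(lra)) ltac:(discriminate) ltac:(discriminate)
    ce_valid_123 ce_valid_132 ce_132_cheaper_at_2).
  cbn in rank_2_lt_3, rank_3_lt_2.
  lra.
Qed.
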